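(* Let $\mathbf P=(P,\leq,0,1)$ be a bounded poset which is the horizontal sum of bounded posets $\mathbf P_{\alpha}=(P_{\alpha},\leq_{\alpha},0,1)$, $\alpha\in\Lambda$. Then the Dedekind-MacNeille completion $\mathrm{DM}(\mathbf P)$ is order-isomorphic to the horizontal sum of the complete lattices $\mathrm{DM}(\mathbf P_{\alpha})$, $\alpha\in\Lambda$.
   Context: The horizontal sum of a family of bounded posets is obtained from their disjoint union by identifying all the bottom elements into a single element $0$ and all the top elements into a single element $1$; two elements are comparable only if one of them is $0$ or $1$ or both lie in the same summand and are comparable there. For a poset $\mathbf P$ and $M\subseteq P$, $U(M)$ and $L(M)$ denote the sets of upper and lower bounds of $M$. The Dedekind-MacNeille completion $\mathrm{DM}(\mathbf P)$ is the complete lattice $(\{B\subseteq P\mid L(U(B))=B\},\subseteq)$, into which $P$ embeds via $x\mapsto L(\{x\})$. *)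

Definition is_bposet {T : Type} (le : T -> T -> Prop) (b t : T) : Prop :=
  (forall x, le x x) /\
  (forall x y, le x y -> le y x -> x = y) /\
  (forall x y z, le x y -> le y z -> le x z) /\
  (forall x, le b x) /\
  (forall x, le x t).

Definition Ub {T : Type} (le : T -> T -> Prop) (M : T -> Prop) : T -> Prop :=
  fun u => forall x, M x -> le x u.
Definition Lb {T : Type} (le : T -> T -> Prop) (M : T -> Prop) : T -> Prop :=
  fun l => forall x, M x -> le l x.

Definition is_cut {T : Type} (le : T -> T -> Prop) (B : T -> Prop) : Prop :=
  forall x, Lb le (Ub le B) x <-> B x.

Definition DM {T : Type} (le : T -> T -> Prop) : Type :=
  { B : T -> Prop | is_cut le B }.
Definition DM_le {T : Type} (le : T -> T -> Prop) (A B : DM le) : Prop :=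
  forall x, proj1_sig A x -> proj1_sig B x.

Lemma is_cut_LU {T : Type} (le : T -> T -> Prop) (M : T -> Prop) :
  is_cut le (Lb le (Ub le M)).
Proof.
  intros x; split.
  - intros H u Hu. apply H. intros y Hy. apply Hy. exact Hu.
  - intros H u Hu. apply Hu. exact H.
Qed.

Lemma is_cut_full {T : Type} (le : T -> T -> Prop) :
  is_cut le (fun _ => True).
Proof. intros x; split; [auto | intros _ u Hu; apply Hu; exact I]. Qed.

Definition DM_bot {T : Type} (le : T -> T -> Prop) : DM le :=
  exist _ (Lb le (Ub le (fun _ => False))) (is_cut_LU le (fun _ => False)).
Definition DM_top {T : Type} (le : T -> T -> Prop) : DM le :=
  exist _ (fun _ => True) (is_cut_full le).

(** * Horizontal sum of a family of bounded posets (T a, le a, bot a, top a)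
    indexed by Lam: a new bottom, a new top, and the elements of each summand
    other than its bottom and top. *)
Inductive hcar (Lam : Type) (T : Lam -> Type) (bot top : forall a, T a) : Type :=
  | HBot : hcar Lam T bot top
  | HTop : hcar Lam T bot top
  | HIn (a : Lam) (x : T a) (nb : x <> bot a) (nt : x <> top a) : hcar Lam T bot top.

Arguments HBot {Lam T bot top}.
Arguments HTop {Lam T bot top}.
Arguments HIn {Lam T bot top} a x nb nt.

Definition hle (Lam : Type) (T : Lam -> Type)
    (le : forall a, T a -> T a -> Prop) (bot top : forall a, T a)
    (x y : hcar Lam T bot top) : Prop :=
  match x, y with
  | HBot, _ => True
  | _, HTop => True
  | HIn a u _ _, HIn b v _ _ =>
      exists e : a = b, le b (eq_rect a T u b e) v
  | _, _ => False
  end.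

Definition order_iso {A B : Type} (leA : A -> A -> Prop) (leB : B -> B -> Prop) : Prop :=
  exists (f : A -> B) (g : B -> A),
    (forall x, g (f x) = x) /\ (forall y, f (g y) = y) /\
    (forall x y, leA x y <-> leB (f x) (f y)).

(* A cut C of the horizontal sum P other than {0} and P contains some element
   x of a summand P_a but not 1, so it has an upper bound other than 1, which
   must lie in P_a as well; hence C lives inside {0} u P_a, and its trace on
   P_a is a cut of P_a other than its bottom and top.  Conversely every such
   cut B of P_a, with 0 adjoined and 1 removed, is a cut of P.  These two
   operations are mutually inverse and respect inclusion. *)

From Stdlib Require Import Classical ClassicalEpsilon FunctionalExtensionality
  PropExtensionality ProofIrrelevance.

Lemma order_iso_of_onto_embedding {A B : Type} (leA : A -> A -> Prop)
    (leB : B -> B -> Prop) (g : B -> A) :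
  (forall x, leA x x) ->
  (forall y1 y2, leB y1 y2 -> leB y2 y1 -> y1 = y2) ->
  (forall y1 y2, leB y1 y2 <-> leA (g y1) (g y2)) ->
  (forall x, exists y, g y = x) ->
  order_iso leA leB.
Proof.
  intros reflA antiB emb onto.
  set (f x := proj1_sig (constructive_indefinite_description _ (onto x))).
  assert (gf : forall x, g (f x) = x)
    by (intro x; exact (proj2_sig (constructive_indefinite_description _ (onto x)))).
  exists f, g; split; [exact gf | split].
  - intro y. apply antiB; apply emb; rewrite gf; apply reflA.
  - intros x y. rewrite emb, !gf. reflexivity.
Qed.

Section Cuts.
Variables (X : Type) (r : X -> X -> Prop).

Lemma DM_ext (A B : DM r) : (forall x, proj1_sig A x <-> proj1_sig B x) -> A = B.
Proof.
  destruct A as [A cutA], B as [B cutB]; simpl; intros AB.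
  assert (A = B) as <-.
  { apply functional_extensionality; intro x. apply propositional_extensionality, AB. }
  f_equal. apply proof_irrelevance.
Qed.

Lemma LU_extensive (M : X -> Prop) x : M x -> Lb r (Ub r M) x.
Proof. intros Mx u Uu. exact (Uu x Mx). Qed.

Variables (b t : X).
Hypothesis hP : is_bposet r b t.

Lemma cut_bot (B : DM r) : proj1_sig B b.
Proof.
  destruct hP as (_ & _ & _ & least & _).
  apply (proj2_sig B). intros u _. apply least.
Qed.

Lemma DM_bot_spec x : proj1_sig (DM_bot r) x <-> x = b.
Proof.
  destruct hP as (_ & anti & _ & least & _). simpl; split.
  - intros Lx. apply anti; [apply Lx; intros ? [] | apply least].
  - intros -> u _. apply least.
Qed.

Lemma cut_top_full (B : DM r) x : proj1_sig B t -> proj1_sig B x.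
Proof.
  destruct hP as (_ & _ & trans & _ & greatest). intros Bt.
  apply (proj2_sig B). intros u Uu. apply (trans _ t); [apply greatest | exact (Uu t Bt)].
Qed.

Lemma DM_bposet : is_bposet (DM_le r) (DM_bot r) (DM_top r).
Proof.
  unfold DM_le; repeat split; auto.
  - intros A B AB BA. apply DM_ext. split; auto.
  - intros A x Ax. apply DM_bot_spec in Ax as ->. apply cut_bot.
Qed.

Lemma DM_ne_top (B : DM r) : B <> DM_top r -> ~ proj1_sig B t.
Proof.
  intros neB Bt. apply neB, DM_ext; intro x.
  split; [intros _; exact I | intros _; now apply cut_top_full].
Qed.

Lemma DM_ne_bot (B : DM r) : B <> DM_bot r -> exists x, proj1_sig B x /\ x <> b.
Proof.
  intros neB. apply NNPP; intros noX. apply neB, DM_ext; intro x. rewrite DM_bot_spec.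
  split.
  - intros Bx. apply NNPP; intros xb. apply noX. now exists x.
  - intros ->. apply cut_bot.
Qed.

Lemma cut_ub_ne_top (B : DM r) : ~ proj1_sig B t -> exists y, Ub r (proj1_sig B) y /\ y <> t.
Proof.
  destruct hP as (refl & _ & _ & _ & _). intros nBt.
  apply NNPP; intros noY. apply nBt, (proj2_sig B). intros u Uu.
  destruct (classic (u = t)) as [-> | ut]; [apply refl | exfalso; apply noY; eauto].
Qed.

End Cuts.

Arguments DM_ext {X r} A B.
Arguments cut_bot {X r b t} hP B.
Arguments DM_bot_spec {X r b t} hP x.
Arguments cut_top_full {X r b t} hP B x.
Arguments DM_bposet {X r b t} hP.
Arguments DM_ne_top {X r b t} hP B.
Arguments DM_ne_bot {X r b t} hP B.
Arguments cut_ub_ne_top {X r b t} hP B.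

Section HorizontalSum.
Variables (Lam : Type) (T : Lam -> Type) (le : forall a, T a -> T a -> Prop)
  (bot top : forall a, T a).

Notation hsum := (hcar Lam T bot top).
Notation hl := (hle Lam T le bot top).

Lemma hle_HIn a x y nb nt nb' nt' : hl (HIn a x nb nt) (HIn a y nb' nt') <-> le a x y.
Proof.
  simpl; split.
  - intros [e xy]. now rewrite (proof_irrelevance _ e eq_refl) in xy.
  - intros xy. now exists eq_refl.
Qed.

Lemma hle_HIn_index a b x y nb nt nb' nt' : hl (HIn a x nb nt) (HIn b y nb' nt') -> a = b.
Proof. intros [e _]. exact e. Qed.

Lemma hsum_bposet : (forall a, is_bposet (le a) (bot a) (top a)) -> is_bposet hl HBot HTop.
Proof.
  intros hP. repeat split.
  - intros [| | a x nb nt]; simpl; auto. exists eq_refl. apply hP.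
  - intros [| | a x nb nt] [| | a' y nb' nt']; simpl; try tauto.
    intros [e xy] [e' yx]. destruct e. rewrite (proof_irrelevance _ e' eq_refl) in yx.
    simpl in xy, yx. assert (x = y) as <- by (apply hP; assumption).
    f_equal; apply proof_irrelevance.
  - intros [| | a x nb nt] [| | a' y nb' nt'] [| | a'' z nb'' nt'']; simpl; try tauto.
    intros [e xy] [e' yz]. destruct e, e'. exists eq_refl. simpl in *.
    eapply hP; eassumption.
  - intros [| | a x nb nt]; exact I.
Qed.

Definition lift_set a (B : T a -> Prop) (z : hsum) : Prop :=
  match z with
  | HBot => True
  | HTop => False
  | HIn b y _ _ => exists e : b = a, B (eq_rect b T y a e)
  end.

Definition trace a (C : hsum -> Prop) (x : T a) : Prop :=
  x = bot a \/ exists nb nt, C (HIn a x nb nt).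

Lemma lift_set_HIn a (B : T a -> Prop) x nb nt : lift_set a B (HIn a x nb nt) <-> B x.
Proof.
  simpl; split.
  - intros [e Bx]. now rewrite (proof_irrelevance _ e eq_refl) in Bx.
  - intros Bx. now exists eq_refl.
Qed.

Hypothesis hP : forall a, is_bposet (le a) (bot a) (top a).

Let hP_sum : is_bposet hl HBot HTop := hsum_bposet hP.

Notation DMs := (fun a => DM (le a)).
Notation hl' := (hle Lam DMs (fun a => DM_le (le a)) (fun a => DM_bot (le a))
  (fun a => DM_top (le a))).

Lemma DM_interior a (B : DM (le a)) :
  B <> DM_bot (le a) -> B <> DM_top (le a) ->
  exists x (nb : x <> bot a) (nt : x <> top a), proj1_sig B x.
Proof.
  intros neb net. destruct (DM_ne_bot (hP a) B neb) as [x [Bx xb]].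
  assert (xt : x <> top a) by (intros ->; exact (DM_ne_top (hP a) B net Bx)).
  now exists x, xb, xt.
Qed.

Lemma lift_cut a (B : DM (le a)) :
  B <> DM_bot (le a) -> B <> DM_top (le a) -> is_cut hl (lift_set a (proj1_sig B)).
Proof.
  destruct (hP a) as (_ & anti & _ & least & greatest). intros neb net.
  destruct (DM_interior a B neb net) as (x & xb & _ & Bx).
  assert (ub_lift : forall v (vt : v <> top a), Ub (le a) (proj1_sig B) v ->
            exists vb, Ub hl (lift_set a (proj1_sig B)) (HIn a v vb vt)).
  { intros v vt Uv.
    assert (vb : v <> bot a) by (intros ->; apply xb, anti; [apply Uv, Bx | apply least]).
    exists vb. intros [| | c w wb wt]; simpl; [tauto | tauto |].
    intros [e Bw]. destruct e. exists eq_refl. exact (Uv w Bw). }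
  destruct (cut_ub_ne_top (hP a) B (DM_ne_top (hP a) B net)) as [y [Uy yt]].
  destruct (ub_lift y yt Uy) as [yb Uy'].
  intro z; split; [| apply LU_extensive].
  intros Lz. pose proof (Lz _ Uy') as zy.
  destruct z as [| | c w wb wt]; [exact I | contradiction |].
  pose proof (hle_HIn_index _ _ _ _ _ _ _ _ zy); subst c. apply lift_set_HIn.
  apply (proj2_sig B). intros v Uv.
  destruct (classic (v = top a)) as [-> | vt]; [apply greatest |].
  destruct (ub_lift v vt Uv) as [vb Uv'].
  exact (proj1 (hle_HIn _ _ _ _ _ _ _) (Lz _ Uv')).
Qed.

Definition cut_of_sum (y : hcar Lam DMs (fun a => DM_bot (le a)) (fun a => DM_top (le a)))
  : DM hl :=
  match y with
  | HBot => DM_bot hl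
  | HTop => DM_top hl
  | HIn a B nb nt => exist _ (lift_set a (proj1_sig B)) (lift_cut a B nb nt)
  end.

Lemma lift_set_le a (B1 B2 : DM (le a)) :
  B1 <> DM_bot (le a) -> B1 <> DM_top (le a) ->
  DM_le (le a) B1 B2 <->
  (forall z, lift_set a (proj1_sig B1) z -> lift_set a (proj1_sig B2) z).
Proof.
  intros neb net. split.
  - intros B12 [| | c w wb wt]; simpl; try tauto.
    intros [e Bw]. destruct e. exists eq_refl. exact (B12 w Bw).
  - intros L12 w Bw.
    destruct (classic (w = bot a)) as [-> | wb]; [apply (cut_bot (hP a)) |].
    assert (wt : w <> top a) by (intros ->; exact (DM_ne_top (hP a) B1 net Bw)).
    apply (lift_set_HIn a _ w wb wt), L12, lift_set_HIn, Bw.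
Qed.

Lemma cut_of_sum_le y1 y2 : hl' y1 y2 <-> DM_le hl (cut_of_sum y1) (cut_of_sum y2).
Proof.
  pose proof (DM_bposet hP_sum) as (_ & _ & _ & DMleast & DMgreatest).
  pose proof (fun z => proj1 (DM_bot_spec hP_sum z)) as in_bot.
  destruct y1 as [| | a B1 nb1 nt1].
  - split; [intros _; apply DMleast | intros _; exact I].
  - destruct y2 as [| | b B2 nb2 nt2].
    + split; [contradiction | intros L; discriminate (in_bot _ (L HTop I))].
    + split; [intros _; apply DMgreatest | intros _; exact I].
    + split; [contradiction | intros L; exact (L HTop I)].
  - destruct (DM_interior a B1 nb1 nt1) as (x & xb & xt & Bx).
    pose proof (proj2 (lift_set_HIn a _ x xb xt) Bx) as Lx.
    destruct y2 as [| | b B2 nb2 nt2].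
    + split; [contradiction | intros L; discriminate (in_bot _ (L _ Lx))].
    + split; [intros _; apply DMgreatest | intros _; exact I].
    + split.
      * intros [e B12]. destruct e. exact (proj1 (lift_set_le a B1 B2 nb1 nt1) B12).
      * intros L12. destruct (L12 _ Lx) as [e _]. destruct e.
        exists eq_refl. exact (proj2 (lift_set_le a B1 B2 nb1 nt1) L12).
Qed.

Lemma cut_HIn_ub (C : DM hl) a x0 nb0 nt0 :
  ~ proj1_sig C HTop -> proj1_sig C (HIn a x0 nb0 nt0) ->
  exists y nb nt, Ub hl (proj1_sig C) (HIn a y nb nt).
Proof.
  intros nCt Cx0.
  destruct (cut_ub_ne_top hP_sum C nCt) as [[| | b y nb nt] [Uu ut]].
  - contradiction (Uu _ Cx0).
  - now contradiction ut.
  - pose proof (hle_HIn_index _ _ _ _ _ _ _ _ (Uu _ Cx0)); subst b. eauto.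
Qed.

Lemma trace_ub (C : hsum -> Prop) a v nb nt :
  Ub hl C (HIn a v nb nt) -> Ub (le a) (trace a C) v.
Proof.
  intros Uv x [-> | (nb' & nt' & Cx)]; [apply hP |].
  exact (proj1 (hle_HIn _ _ _ _ _ _ _) (Uv _ Cx)).
Qed.

Section Trace.
Variables (C : DM hl) (a : Lam) (x0 : T a) (nb0 : x0 <> bot a) (nt0 : x0 <> top a).
Hypotheses (nCt : ~ proj1_sig C HTop) (Cx0 : proj1_sig C (HIn a x0 nb0 nt0)).

Lemma trace_cut : is_cut (le a) (trace a (proj1_sig C)).
Proof.
  destruct (hP a) as (_ & anti & _ & _ & greatest).
  destruct (cut_HIn_ub C a x0 nb0 nt0 nCt Cx0) as (y & yb & yt & Uy).
  intro x; split; [| apply LU_extensive].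
  intros Lx.
  destruct (classic (x = bot a)) as [xb | xb]; [now left |].
  destruct (classic (x = top a)) as [-> | xt].
  { exfalso. apply yt, anti; [apply greatest | exact (Lx y (trace_ub _ _ _ _ _ Uy))]. }
  right. exists xb, xt. apply (proj2_sig C). intros [| | b v vb vt] Uv.
  - exact (Uv _ Cx0).
  - exact I.
  - destruct (hle_HIn_index _ _ _ _ _ _ _ _ (Uv _ Cx0)).
    apply hle_HIn, Lx, (trace_ub _ _ _ _ _ Uv).
Qed.

Lemma lift_set_trace z : lift_set a (trace a (proj1_sig C)) z <-> proj1_sig C z.
Proof.
  destruct (cut_HIn_ub C a x0 nb0 nt0 nCt Cx0) as (y & yb & yt & Uy).
  destruct z as [| | b w wb wt]; simpl.
  - split; intros _; [apply (cut_bot hP_sum) | exact I].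
  - tauto.
  - split.
    + intros [e [wb' | (wb' & wt' & Cw)]]; destruct e; simpl in *; [contradiction |].
      now rewrite (proof_irrelevance _ wb wb'), (proof_irrelevance _ wt wt').
    + intros Cw. destruct (hle_HIn_index _ _ _ _ _ _ _ _ (Uy _ Cw)).
      exists eq_refl. right. eauto.
Qed.

Lemma trace_ne_bot : exist _ _ trace_cut <> DM_bot (le a).
Proof.
  intros E. apply nb0, (DM_bot_spec (hP a)). rewrite <- E. right. eauto.
Qed.

Lemma trace_ne_top : exist _ _ trace_cut <> DM_top (le a).
Proof.
  destruct (hP a) as (_ & anti & _ & least & greatest).
  intros E.
  assert (Ct : proj1_sig (exist _ _ trace_cut) (top a)) by (rewrite E; exact I).
  destruct Ct as [tb | (_ & tt & _)]; [| now apply tt].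
  apply nb0, anti; [rewrite <- tb; apply greatest | apply least].
Qed.

End Trace.

Lemma cut_of_sum_surjective (C : DM hl) : exists y, cut_of_sum y = C.
Proof.
  destruct (classic (proj1_sig C HTop)) as [Ct | nCt].
  { exists HTop. apply DM_ext; intro z; split; [intros _ | intros _; exact I].
    now apply (cut_top_full hP_sum). }
  destruct (classic (exists a x nb nt, proj1_sig C (HIn a x nb nt)))
    as [(a & x & nb & nt & Cx) | noIn].
  - exists (HIn a _ (trace_ne_bot C a x nb nt nCt Cx) (trace_ne_top C a x nb nt nCt Cx)).
    apply DM_ext, (lift_set_trace C a x nb nt nCt Cx).
  - exists HBot. apply DM_ext; intro z. rewrite (DM_bot_spec hP_sum). split.
    + intros ->. apply (cut_bot hP_sum).
    + destruct z as [| | a x nb nt]; intros Cz; [reflexivity | contradiction |].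
      exfalso. apply noIn. eauto.
Qed.

End HorizontalSum.

Theorem proposition3 (Lam : Type) (T : Lam -> Type)
    (le : forall a, T a -> T a -> Prop) (bot top : forall a, T a)
    (hP : forall a, is_bposet (le a) (bot a) (top a)) :
  order_iso
    (DM_le (hle Lam T le bot top))
    (hle Lam (fun a => DM (le a)) (fun a => DM_le (le a))
         (fun a => DM_bot (le a)) (fun a => DM_top (le a))).
Proof.
  pose proof (hsum_bposet _ _ _ _ _ (fun a => DM_bposet (hP a))) as (_ & antisym & _).
  apply (order_iso_of_onto_embedding _ _ (cut_of_sum Lam T le bot top hP)).
  - intros C x Cx. exact Cx.
  - exact antisym.
  - apply cut_of_sum_le.
  - apply cut_of_sum_surjective.
Qed.
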